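(* Let $a,b,k,m>0$ and consider, with bifurcation parameter $c>0$, the system $$\frac{dx}{dt}=bx(1-x-cy),\qquad \frac{dy}{dt}=y\Big(\frac{1}{1+kx}-y-ax-mxy\Big).$$ Suppose $u(E)<0$ and $m\ne 1-a-k$. Then the system undergoes a transcritical bifurcation around the boundary equilibrium $E_2=(0,1)$ at the bifurcation parameter threshold $c_{TR}=1$.
   Context: Here $u(x)=A_1x^3+A_2x^2+A_3x+A_4$ with $A_1=km$, $A_2=(-ac-m+1)k+m$, $A_3=-ac-k-m+1$, $A_4=c-1$ (the cubic whose roots in $(0,1)$ give the $x$-coordinates of positive equilibria $(x,(1-x)/c)$), and $E$ denotes the larger real root of $u'(x)$ (assumed to exist). All parameters are positive. *)

From Stdlib Require Import Reals.
From Coquelicot Require Import Coquelicot.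
Open Scope R_scope.

Inductive var := Vx | Vy | Vc.

Definition pd (v : var) (g : R -> R -> R -> R) : R -> R -> R -> R :=
  fun x y c =>
    match v with
    | Vx => Derive (fun t => g t y c) x
    | Vy => Derive (fun t => g x t c) y
    | Vc => Derive (fun t => g x y t) c
    end.

Definition ex_pd (v : var) (g : R -> R -> R -> R) (x y c : R) : Prop :=
  match v with
  | Vx => ex_derive (fun t => g t y c) x
  | Vy => ex_derive (fun t => g x t c) y
  | Vc => ex_derive (fun t => g x y t) c
  end.

Definition uncurry3 (g : R -> R -> R -> R) : R * R * R -> R :=
  fun p => g (fst (fst p)) (snd (fst p)) (snd p).

Definition C2_near (g : R -> R -> R -> R) (x0 y0 c0 : R) : Prop :=
  exists eps : R, 0 < eps /\
    forall x y c, Rabs (x - x0) < eps -> Rabs (y - y0) < eps ->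
      Rabs (c - c0) < eps ->
      continuous (uncurry3 g) (x, y, c) /\
      (forall i, ex_pd i g x y c) /\
      (forall i, continuous (uncurry3 (pd i g)) (x, y, c)) /\
      (forall i j, ex_pd j (pd i g) x y c) /\
      (forall i j, continuous (uncurry3 (pd j (pd i g))) (x, y, c)).

(** Transcritical bifurcation of the planar family
      x' = F1 x y c,  y' = F2 x y c
    at the equilibrium (x0,y0) for the parameter value c0, in the sense of
    Sotomayor's theorem (Perko, Differential Equations and Dynamical
    Systems, Sec. 4.2), which is the criterion used in the paper:
    - F = (F1,F2) is C^2 near (x0,y0,c0) and F(x0,y0,c0) = 0;
    - A = DF(x0,y0,c0) has 0 as a simple eigenvalue
      (characteristic polynomial l^2 - tr A l + det A: det A = 0, tr A <> 0);
    - with v <> 0, A v = 0 and w <> 0, A^T w = 0: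
        w . F_c = 0,  w . (DF_c v) <> 0,  w . D^2F(v,v) <> 0
      (all evaluated at (x0,y0,c0)). *)
Definition transcritical_bifurcation (F1 F2 : R -> R -> R -> R)
  (x0 y0 c0 : R) : Prop :=
  C2_near F1 x0 y0 c0 /\ C2_near F2 x0 y0 c0 /\
  F1 x0 y0 c0 = 0 /\ F2 x0 y0 c0 = 0 /\
  let a11 := pd Vx F1 x0 y0 c0 in
  let a12 := pd Vy F1 x0 y0 c0 in
  let a21 := pd Vx F2 x0 y0 c0 in
  let a22 := pd Vy F2 x0 y0 c0 in
  (a11 * a22 - a12 * a21 = 0 /\ a11 + a22 <> 0) /\
  exists v1 v2 w1 w2 : R,
    (v1 <> 0 \/ v2 <> 0) /\ (w1 <> 0 \/ w2 <> 0) /\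
    a11 * v1 + a12 * v2 = 0 /\ a21 * v1 + a22 * v2 = 0 /\
    w1 * a11 + w2 * a21 = 0 /\ w1 * a12 + w2 * a22 = 0 /\
    w1 * pd Vc F1 x0 y0 c0 + w2 * pd Vc F2 x0 y0 c0 = 0 /\
    w1 * (pd Vc (pd Vx F1) x0 y0 c0 * v1 + pd Vc (pd Vy F1) x0 y0 c0 * v2)
    + w2 * (pd Vc (pd Vx F2) x0 y0 c0 * v1 + pd Vc (pd Vy F2) x0 y0 c0 * v2)
      <> 0 /\
    w1 * (pd Vx (pd Vx F1) x0 y0 c0 * v1 * v1
          + pd Vy (pd Vx F1) x0 y0 c0 * v1 * v2
          + pd Vx (pd Vy F1) x0 y0 c0 * v2 * v1
          + pd Vy (pd Vy F1) x0 y0 c0 * v2 * v2)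
    + w2 * (pd Vx (pd Vx F2) x0 y0 c0 * v1 * v1
          + pd Vy (pd Vx F2) x0 y0 c0 * v1 * v2
          + pd Vx (pd Vy F2) x0 y0 c0 * v2 * v1
          + pd Vy (pd Vy F2) x0 y0 c0 * v2 * v2) <> 0.

Definition field1 (b : R) : R -> R -> R -> R :=
  fun x y c => b * x * (1 - x - c * y).
Definition field2 (a k m : R) : R -> R -> R -> R :=
  fun x y c => y * (1 / (1 + k * x) - y - a * x - m * x * y).

Definition u_poly (a c k m x : R) : R :=
  let A1 := k * m in
  let A2 := (- a * c - m + 1) * k + m in
  let A3 := - a * c - k - m + 1 in
  let A4 := c - 1 in
  A1 * x ^ 3 + A2 * x ^ 2 + A3 * x + A4.
Definition du_poly (a c k m x : R) : R :=
  let A1 := k * m in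
  let A2 := (- a * c - m + 1) * k + m in
  let A3 := - a * c - k - m + 1 in
  3 * A1 * x ^ 2 + 2 * A2 * x + A3.

(** At [c = 1] the Jacobian of the field at [E2 = (0,1)] is
    [[0, 0], [-(a+k+m), -1]]: its determinant vanishes and its trace is [-1],
    so [0] is a simple eigenvalue, with right null vector [v = (1, -(a+k+m))]
    and left null vector [w = (1, 0)].  Since [w] only sees the first
    component [b x (1 - x - c y)], Sotomayor's quantities are read off from it:
    [w . F_c = -b x y = 0], [w . DF_c v = -b] and
    [w . D^2F(v,v) = -2b (1 - a - k - m)], nonzero exactly when
    [m <> 1 - a - k].  The remaining work is smoothness: both components
    are C^2 on the slab [1 + k x > 0], with explicit partial derivatives. *)

From Pilot Require Import Defs.
From Stdlib Require Import Reals Lra.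
From Coquelicot Require Import Coquelicot.
Open Scope R_scope.

Section RealValuedContinuity.
Context {U : UniformSpace}.

Lemma continuous_Rplus_comp (f g : U -> R) p :
  continuous f p -> continuous g p -> continuous (fun q => f q + g q) p.
Proof. exact (continuous_plus f g p). Qed.

Lemma continuous_Rmult_comp (f g : U -> R) p :
  continuous f p -> continuous g p -> continuous (fun q => f q * g q) p.
Proof. exact (continuous_mult f g p). Qed.

Lemma continuous_Ropp_comp (f : U -> R) p :
  continuous f p -> continuous (fun q => - f q) p.
Proof. exact (continuous_opp f p). Qed.

Lemma continuous_Rminus_comp (f g : U -> R) p :
  continuous f p -> continuous g p -> continuous (fun q => f q - g q) p.
Proof.
  intros Hf Hg. apply continuous_Rplus_comp; [exact Hf|].
  now apply continuous_Ropp_comp.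
Qed.

Lemma continuous_Rinv_comp_gen (f : U -> R) p :
  continuous f p -> f p <> 0 -> continuous (fun q => / f q) p.
Proof.
  intros Hf Hp. apply (continuous_comp f Rinv); [exact Hf|].
  now apply continuous_Rinv.
Qed.

End RealValuedContinuity.

Lemma continuous_coord_x (p : R * R * R) : continuous (fun q => fst (fst q)) p.
Proof.
  destruct p as [[x y] c].
  apply (continuous_comp fst fst); apply continuous_fst.
Qed.

Lemma continuous_coord_y (p : R * R * R) : continuous (fun q => snd (fst q)) p.
Proof.
  destruct p as [[x y] c].
  apply (continuous_comp fst snd);
    [apply continuous_fst | apply continuous_snd].
Qed.

Lemma continuous_coord_c (p : R * R * R) : continuous (fun q => snd q) p.
Proof. destruct p as [[x y] c]. apply continuous_snd. Qed.

(** Leaves the side conditions [_ <> 0] of the inverses.  The coordinate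
    projections are tried with [apply] rather than matched, since their
    implicit type arguments depend on how the goal was produced. *)
Ltac solve_continuity :=
  cbv beta iota;
  lazymatch goal with
  | |- continuous (fun _ => ?r) _ => apply continuous_const
  | |- continuous (fun q => _ + _) _ =>
      apply continuous_Rplus_comp; solve_continuity
  | |- continuous (fun q => _ - _) _ =>
      apply continuous_Rminus_comp; solve_continuity
  | |- continuous (fun q => _ * _) _ =>
      apply continuous_Rmult_comp; solve_continuity
  | |- continuous (fun q => _ / _) _ => unfold Rdiv; solve_continuity
  | |- continuous (fun q => - _) _ =>
      apply continuous_Ropp_comp; solve_continuity
  | |- continuous (fun q => / _) _ =>
      apply continuous_Rinv_comp_gen; [solve_continuity | cbn [fst snd]]
  | |- _ =>
      first [ apply continuous_coord_x | apply continuous_coord_y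
            | apply continuous_coord_c ]
  end.

Definition is_pd (v : Defs.var) (g : R -> R -> R -> R) (x y c l : R) : Prop :=
  match v with
  | Vx => is_derive (fun t => g t y c) x l
  | Vy => is_derive (fun t => g x t c) y l
  | Vc => is_derive (fun t => g x y t) c l
  end.

Lemma is_pd_ex_pd v g x y c l : is_pd v g x y c l -> ex_pd v g x y c.
Proof. destruct v; intros H; eexists; exact H. Qed.

Lemma is_pd_unique v g x y c l : is_pd v g x y c l -> pd v g x y c = l.
Proof. destruct v; apply is_derive_unique. Qed.

Section SlabExtensionality.
Variable D : R -> Prop.
Hypothesis D_open : open D.

Lemma locally_slab x y c :
  D x -> locally (x, y, c) (fun q : R * R * R => D (fst (fst q))).
Proof. intros Dx. apply (continuous_coord_x (x, y, c) D), D_open, Dx. Qed.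

Lemma is_pd_ext_slab v (f h : R -> R -> R -> R) x y c l :
  (forall x y c, D x -> f x y c = h x y c) -> D x ->
  is_pd v f x y c l -> is_pd v h x y c l.
Proof.
  intros Efh Dx. destruct v; simpl; intros Hf.
  - apply (is_derive_ext_loc (fun t => f t y c)); [|exact Hf].
    apply (filter_imp D); [intros t Dt; now apply Efh | now apply D_open].
  - apply (is_derive_ext (fun t => f x t c));
      [intros t; now apply Efh | exact Hf].
  - apply (is_derive_ext (fun t => f x y t));
      [intros t; now apply Efh | exact Hf].
Qed.

Lemma continuous_ext_slab (f h : R -> R -> R -> R) x y c :
  (forall x y c, D x -> f x y c = h x y c) -> D x ->
  continuous (uncurry3 f) (x, y, c) -> continuous (uncurry3 h) (x, y, c).
Proof.
  intros Efh Dx. apply continuous_ext_loc.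
  apply (filter_imp (fun q : R * R * R => D (fst (fst q)))).
  - intros [[x' y'] c'] Dx'. now apply Efh.
  - now apply locally_slab.
Qed.

End SlabExtensionality.

Record C2_on_slab (D : R -> Prop) (g : R -> R -> R -> R)
    (g1 : Defs.var -> R -> R -> R -> R)
    (g2 : Defs.var -> Defs.var -> R -> R -> R -> R) : Prop := {
  slab_cont : forall x y c, D x -> continuous (uncurry3 g) (x, y, c);
  slab_is_pd : forall i x y c, D x -> is_pd i g x y c (g1 i x y c);
  slab_pd_cont : forall i x y c, D x -> continuous (uncurry3 (g1 i)) (x, y, c);
  slab_is_pd_pd : forall i j x y c, D x -> is_pd j (g1 i) x y c (g2 i j x y c);
  slab_pd_pd_cont :
    forall i j x y c, D x -> continuous (uncurry3 (g2 i j)) (x, y, c)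
}.

Section C2OnSlab.
Variables (D : R -> Prop) (g : R -> R -> R -> R).
Variable g1 : Defs.var -> R -> R -> R -> R.
Variable g2 : Defs.var -> Defs.var -> R -> R -> R -> R.
Hypothesis D_open : open D.
Hypothesis Hg : C2_on_slab D g g1 g2.

Lemma pd_on_slab i x y c : D x -> pd i g x y c = g1 i x y c.
Proof. intros Dx. apply is_pd_unique, (slab_is_pd _ _ _ _ Hg), Dx. Qed.

Lemma is_pd_pd_on_slab i j x y c :
  D x -> is_pd j (pd i g) x y c (g2 i j x y c).
Proof.
  intros Dx. apply (is_pd_ext_slab D D_open j (g1 i)); [|exact Dx|].
  - intros x' y' c' Dx'. symmetry. now apply pd_on_slab.
  - now apply (slab_is_pd_pd _ _ _ _ Hg).
Qed.

Lemma pd_pd_on_slab i j x y c : D x -> pd j (pd i g) x y c = g2 i j x y c.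
Proof. intros Dx. now apply is_pd_unique, is_pd_pd_on_slab. Qed.

Lemma C2_near_of_slab x0 y0 c0 : D x0 -> C2_near g x0 y0 c0.
Proof.
  intros Dx0. destruct (D_open x0 Dx0) as [eps Heps].
  exists eps. split; [apply cond_pos|].
  intros x y c Hx _ _.
  assert (Dx : D x) by (apply Heps; exact Hx).
  assert (Epd : forall i x y c, D x -> g1 i x y c = pd i g x y c).
  { intros i x' y' c' Dx'. symmetry. now apply pd_on_slab. }
  split; [now apply (slab_cont _ _ _ _ Hg)|].
  split; [intros i; eapply is_pd_ex_pd, (slab_is_pd _ _ _ _ Hg), Dx|].
  split.
  { intros i.
    apply (continuous_ext_slab D D_open (g1 i)); [apply Epd | exact Dx |].
    now apply (slab_pd_cont _ _ _ _ Hg). }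
  split; [intros i j; eapply is_pd_ex_pd, is_pd_pd_on_slab, Dx|].
  intros i j. apply (continuous_ext_slab D D_open (g2 i j)); [|exact Dx|].
  - intros x' y' c' Dx'. symmetry. now apply pd_pd_on_slab.
  - now apply (slab_pd_pd_cont _ _ _ _ Hg).
Qed.

End C2OnSlab.

Definition field1_d1 (b : R) (i : Defs.var) : R -> R -> R -> R :=
  match i with
  | Vx => fun x y c => b * (1 - 2 * x - c * y)
  | Vy => fun x y c => - b * c * x
  | Vc => fun x y c => - b * x * y
  end.

Definition field1_d2 (b : R) (i j : Defs.var) : R -> R -> R -> R :=
  match i, j with
  | Vx, Vx => fun x y c => - 2 * b
  | Vx, Vy | Vy, Vx => fun x y c => - b * c
  | Vx, Vc | Vc, Vx => fun x y c => - b * y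
  | Vy, Vc | Vc, Vy => fun x y c => - b * x
  | Vy, Vy | Vc, Vc => fun x y c => 0
  end.

Lemma field1_C2_on_slab b :
  C2_on_slab (fun _ => True) (field1 b) (field1_d1 b) (field1_d2 b).
Proof.
  split.
  - intros x y c _. unfold uncurry3, field1. solve_continuity.
  - intros [] x y c _; unfold field1, field1_d1; simpl; auto_derive; auto; ring.
  - intros [] x y c _; unfold uncurry3, field1_d1; solve_continuity.
  - intros [] [] x y c _; unfold field1_d1, field1_d2; simpl;
      auto_derive; auto; ring.
  - intros [] [] x y c _; unfold uncurry3, field1_d2; solve_continuity.
Qed.

Definition field2_d1 (a k m : R) (i : Defs.var) : R -> R -> R -> R :=
  match i with
  | Vx => fun x y c =>
      - k * y * (/ (1 + k * x) * / (1 + k * x)) - a * y - m * y * y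
  | Vy => fun x y c => / (1 + k * x) - 2 * y - a * x - 2 * m * x * y
  | Vc => fun x y c => 0
  end.

Definition field2_d2 (a k m : R) (i j : Defs.var) : R -> R -> R -> R :=
  match i, j with
  | Vx, Vx => fun x y c =>
      2 * k * k * y * (/ (1 + k * x) * / (1 + k * x) * / (1 + k * x))
  | Vx, Vy | Vy, Vx => fun x y c =>
      - k * (/ (1 + k * x) * / (1 + k * x)) - a - 2 * m * y
  | Vy, Vy => fun x y c => - 2 - 2 * m * x
  | _, _ => fun x y c => 0
  end.

Lemma open_pos_denominator k : open (fun x => 0 < 1 + k * x).
Proof.
  apply (open_comp (fun x => 1 + k * x) (fun u => 0 < u)); [|apply open_gt].
  intros x _. apply (ex_derive_continuous (fun x => 1 + k * x)).
  auto_derive. exact I.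
Qed.

Lemma field2_C2_on_slab a k m :
  C2_on_slab (fun x => 0 < 1 + k * x)
    (field2 a k m) (field2_d1 a k m) (field2_d2 a k m).
Proof.
  split; intros * Dx; assert (Hden : 1 + k * x <> 0) by lra.
  - unfold uncurry3, field2. solve_continuity. auto.
  - destruct i; unfold field2, field2_d1; simpl; auto_derive; auto; field; auto.
  - destruct i; unfold uncurry3, field2_d1; solve_continuity; auto.
  - destruct i, j; unfold field2_d1, field2_d2; simpl;
      auto_derive; auto; field; auto.
  - destruct i, j; unfold uncurry3, field2_d2; solve_continuity; auto.
Qed.

Theorem theorem9 (a b k m : R) (E : R) :
  0 < a -> 0 < b -> 0 < k -> 0 < m ->
  (* E is the larger real root of u' (at the threshold c = 1) *)
  du_poly a 1 k m E = 0 ->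
  (forall z, du_poly a 1 k m z = 0 -> z <= E) ->
  u_poly a 1 k m E < 0 ->
  m <> 1 - a - k ->
  transcritical_bifurcation (field1 b) (field2 a k m) 0 1 1.
Proof.
  intros _ Hb _ _ _ _ _ Hne.
  assert (D0 : 0 < 1 + k * 0) by lra.
  pose proof (field1_C2_on_slab b) as H1.
  pose proof (field2_C2_on_slab a k m) as H2.
  pose proof (open_pos_denominator k) as O2.
  split; [now apply (C2_near_of_slab _ _ _ _ open_true H1)|].
  split; [now apply (C2_near_of_slab _ _ _ _ O2 H2)|].
  split; [unfold field1; ring|].
  split; [unfold field2; field; lra|].
  cbv zeta.
  rewrite !(pd_pd_on_slab _ _ _ _ open_true H1), !(pd_on_slab _ _ _ _ H1),
    !(pd_pd_on_slab _ _ _ _ O2 H2 _ _ _ _ _ D0),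
    !(pd_on_slab _ _ _ _ H2 _ _ _ _ D0) by exact I.
  cbn [field1_d1 field1_d2 field2_d1 field2_d2].
  replace (1 + k * 0) with 1 by ring. rewrite Rinv_1.
  split; [split; lra|].
  exists 1, (- (a + k + m)), 1, 0.
  repeat split; try lra; try ring.
  intro H. apply Hne. nra.
Qed.
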